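(* Let $\psi^a_A$ be smooth fields on Minkowski space with values in the odd part of $\Lambda$, and let $A_\mu$ be a smooth gauge potential as in the context. Define $\mathcal{J}^{ab}$, $C_\mu^{ab}$, $\mathcal{X}^2$ and $\mathcal{J}^2$ as in the context. Then for all $\mu$ and all bispinor indices $a,b$: $$ \mathcal{X}^2\big(C_\mu^{ab}+\partial_\mu\mathcal{J}^{ab}\big) = -4\big(C_\mu^{cb}+\partial_\mu\mathcal{J}^{cb}\big)\beta_{cf}\Big(\mathcal{J}^2\mathcal{J}^{af}+2\beta_{ghde}\mathcal{J}^{gd}\mathcal{J}^{hf}\mathcal{J}^{ae}\Big) -8\big(C_\mu^{gb}+\partial_\mu\mathcal{J}^{gb}\big)\beta_{cf}\beta_{ghde}\Big(\mathcal{J}^{he}\mathcal{J}^{cf}\mathcal{J}^{ad}+\mathcal{J}^{cd}\mathcal{J}^{hf}\mathcal{J}^{ae}+\mathcal{J}^{hd}\mathcal{J}^{ce}\mathcal{J}^{af}\Big). $$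
   Context: Summation over repeated indices is understood. Colour indices $A,B,\dots\in\{1,2,3\}$; bispinor indices $a,b,\dots\in\{1,2,\dot1,\dot2\}$ (ordered in this way); spacetime indices $\mu,\nu\in\{0,1,2,3\}$, raised/lowered with $\eta=\mathrm{diag}(1,-1,-1,-1)$. $\Lambda$ is the complex Grassmann algebra generated by the 24 anticommuting generators $\psi^a_A,\overline{\psi^a_A}$, equipped with the antilinear involution (complex conjugation) $x\mapsto\bar x$ exchanging $\psi^a_A$ and $\overline{\psi^a_A}$ and satisfying $\overline{xy}=\bar y\,\bar x$; quark fields are $\Lambda$-valued fields on spacetime whose components $\psi^a_A$ are odd. $g^{AB}=\delta^{AB}$ is the Hermitian colour metric and $\epsilon^{ABC}$ the totally antisymmetric symbol with $\epsilon^{123}=1$. The gauge potential $A_{\mu A}{}^{B}$ is a smooth field of Hermitian $3\times3$ matrices ($\overline{A_{\mu A}{}^B}=A_{\mu B}{}^A$), $g$ is a nonzero real coupling constant, $D_\mu\psi^a_A=\partial_\mu\psi^a_A+ig\,A_{\mu A}{}^B\psi^a_B$, and $\overline{D_\mu\psi^a_A}$ is its conjugate. Spinor structures: $\sigma^\mu=(I,\sigma^1,\sigma^2,\sigma^3)$, $\tilde\sigma^\mu=(I,-\sigma^1,-\sigma^2,-\sigma^3)$ with $\sigma^k$ the Pauli matrices; in the ordering $(1,2,\dot1,\dot2)$, $(\gamma^\mu)^a{}_b=\begin{pmatrix}0&\tilde\sigma^\mu\\ \sigma^\mu&0\end{pmatrix}$, $\epsilon_{ab}=\begin{pmatrix}\varepsilon&0\\0&-\varepsilon\end{pmatrix}$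 with $\varepsilon=\begin{pmatrix}0&1\\-1&0\end{pmatrix}$, $(\gamma^\mu)_{cb}:=(\gamma^\mu)^a{}_b\epsilon_{ac}$, and the Hermitian form $\beta_{ab}=\begin{pmatrix}0&I_2\\ I_2&0\end{pmatrix}$. Define $\beta_{abcd}:=\tfrac12\overline{(\gamma_\mu)_{ab}}(\gamma^\mu)_{cd}$ (symmetric in $(a,b)$ and in $(c,d)$). Gauge invariants: $\mathcal{J}^{ab}:=\overline{\psi^a_A}g^{AB}\psi^b_B$, $C_\mu^{ab}:=\overline{\psi^a_A}g^{AB}(D_\mu\psi^b_B)-(\overline{D_\mu\psi^a_A})g^{AB}\psi^b_B$, $\mathcal{J}^2:=\mathcal{J}^{ab}\beta_{acbd}\mathcal{J}^{cd}$, and $\mathcal{X}^2:=4\beta_{bcef}\beta_{ad}\{\mathcal{J}^{ad}\mathcal{J}^{be}\mathcal{J}^{cf}+2\mathcal{J}^{ae}\mathcal{J}^{bf}\mathcal{J}^{cd}\}$. *)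

From HB Require Import structures.
From mathcomp Require Import all_boot all_order all_algebra.
From mathcomp Require Import complex.
From mathcomp Require Import all_classical all_reals all_analysis.
Set Implicit Arguments. Unset Strict Implicit. Unset Printing Implicit Defensive.
Import Order.TTheory GRing.Theory Num.Theory.
Local Open Scope ring_scope.

Section Defs.
Variable R : realType.
Local Notation C := R[i].

(* The complex Grassmann algebra Lambda on 24 generators e_0..e_23.    *)
(* An element is the family of its coefficients on the monomials       *)
(* e_S = e_{s1} e_{s2} ... e_{sk}  (s1 < s2 < ... < sk), S a subset.   *)
(* Generators e_i and e_(i+12 mod 24) are exchanged by conjugation     *)
(* (they play the roles of psi^a_A and its conjugate).                 *)
Definition Gen := 'I_24.
Definition Lam := {ffun {set Gen} -> C}.

(* sign of e_S e_T = gsign S T * e_(S :|: T) for disjoint S T *)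
Definition gsign (S T : {set Gen}) : C :=
  (-1) ^+ #|[set p : Gen * Gen | [&& p.1 \in S, p.2 \in T & (p.2 < p.1)%N]]|.

Definition gmul (x y : Lam) : Lam :=
  [ffun U => \sum_(S : {set Gen}) \sum_(T : {set Gen} | [disjoint S & T] && (S :|: T == U))
               gsign S T * x S * y T].

Definition gscal (c : C) (x : Lam) : Lam := [ffun S => c * x S].

Definition gone : Lam := [ffun S => (S == finset.set0)%:R].
Definition gen (i : Gen) : Lam := [ffun S => (S == finset.set1 i)%:R].

Definition gbar (i : Gen) : Gen := inord ((i + 12) %% 24).

Definition conj_mono (S : {set Gen}) : Lam :=
  foldr gmul gone [seq gen (gbar i) | i <- rev (enum S)].

Definition gconj (x : Lam) : Lam :=
  \sum_(S : {set Gen}) gscal (conjc (x S)) (conj_mono S).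

Definition is_odd (x : Lam) : Prop := forall S : {set Gen}, ~~ odd #|S| -> x S = 0.

Definition evec (mu : 'I_4) : 'rV[R]_4 := delta_mx 0 mu.

Definition dL (mu : 'I_4) (F : 'rV[R]_4 -> Lam) (x : 'rV[R]_4) : Lam :=
  [ffun S => Complex ('D_(evec mu) (fun y => complex.Re (F y S)) x)
                     ('D_(evec mu) (fun y => complex.Im (F y S)) x)].

Definition diff_field (F : 'rV[R]_4 -> Lam) : Prop :=
  forall (x : 'rV[R]_4) (mu : 'I_4) (S : {set Gen}),
    derivable (fun y => complex.Re (F y S)) x (evec mu) /\
    derivable (fun y => complex.Im (F y S)) x (evec mu).

(* Spinor structures. Bispinor indices 'I_4 ordered (1,2,1dot,2dot).   *)
Definition iC : C := Complex 0 1.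

Definition sigm (mu : 'I_4) (i j : nat) : C :=
  match nat_of_ord mu, i, j with
  | 0, 0, 0 => 1 | 0, 1, 1 => 1
  | 1, 0, 1 => 1 | 1, 1, 0 => 1
  | 2, 0, 1 => - iC | 2, 1, 0 => iC
  | 3, 0, 0 => 1 | 3, 1, 1 => -1
  | _, _, _ => 0
  end.
Definition sigmt (mu : 'I_4) (i j : nat) : C :=
  if nat_of_ord mu == 0%N then sigm mu i j else - sigm mu i j.

Definition gam (mu a b : 'I_4) : C :=
  if ((a < 2) && (2 <= b))%N then sigmt mu a (b - 2)
  else if ((2 <= a) && (b < 2))%N then sigm mu (a - 2) b
  else 0.

Definition eps2 (i j : nat) : C :=
  match i, j with 0, 1 => 1 | 1, 0 => -1 | _, _ => 0 end.
Definition eps4 (a b : 'I_4) : C :=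
  if ((a < 2) && (b < 2))%N then eps2 a b
  else if ((2 <= a) && (2 <= b))%N then - eps2 (a - 2) (b - 2)
  else 0.

Definition gamlow (mu c b : 'I_4) : C := \sum_(a < 4) gam mu a b * eps4 a c.

Definition eta (mu nu : 'I_4) : C :=
  if mu == nu then (if nat_of_ord mu == 0%N then 1 else -1) else 0.

Definition beta2 (a b : 'I_4) : C :=
  (((a < 2) && (2 <= b) && (nat_of_ord a == b - 2)) ||
   ((2 <= a) && (b < 2) && (a - 2 == nat_of_ord b)))%N%:R.

Definition beta4 (a b c d : 'I_4) : C :=
  2^-1 * \sum_(mu < 4)
    conjc (\sum_(nu < 4) eta mu nu * gamlow nu a b) * gamlow mu c d.

(* Gauge invariants. psi a A x = psi^a_A(x); Amu mu x A B = A_{mu A}^B(x). *)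
Definition Field := 'I_4 -> 'I_3 -> 'rV[R]_4 -> Lam.
Definition Gauge := 'I_4 -> 'rV[R]_4 -> 'M[C]_3.

Definition Dpsi (g : R) (Amu : Gauge) (psi : Field) (mu a : 'I_4) (A : 'I_3)
  (x : 'rV[R]_4) : Lam :=
  dL mu (psi a A) x + \sum_(B < 3) gscal (iC * (Complex g 0) * Amu mu x A B) (psi a B x).

(* J^{ab} = psibar^a_A g^{AB} psi^b_B with g^{AB} = delta^{AB} *)
Definition Jc (psi : Field) (a b : 'I_4) (x : 'rV[R]_4) : Lam :=
  \sum_(A < 3) gmul (gconj (psi a A x)) (psi b A x).

Definition Cmu (g : R) (Amu : Gauge) (psi : Field) (mu a b : 'I_4) (x : 'rV[R]_4)
  : Lam :=
  \sum_(A < 3) (gmul (gconj (psi a A x)) (Dpsi g Amu psi mu b A x)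
               - gmul (gconj (Dpsi g Amu psi mu a A x)) (psi b A x)).

Definition Kc (g : R) (Amu : Gauge) (psi : Field) (mu a b : 'I_4) (x : 'rV[R]_4)
  : Lam :=
  Cmu g Amu psi mu a b x + dL mu (Jc psi a b) x.

Definition J2 (psi : Field) (x : 'rV[R]_4) : Lam :=
  \sum_(a < 4) \sum_(b < 4) \sum_(c < 4) \sum_(d < 4)
    gscal (beta4 a c b d) (gmul (Jc psi a b x) (Jc psi c d x)).

Definition X2 (psi : Field) (x : 'rV[R]_4) : Lam :=
  gscal 4 (\sum_(a < 4) \sum_(b < 4) \sum_(c < 4) \sum_(d < 4) \sum_(e < 4) \sum_(f < 4)
    gscal (beta4 b c e f * beta2 a d)
      (gmul (gmul (Jc psi a d x) (Jc psi b e x)) (Jc psi c f x)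
       + gscal 2 (gmul (gmul (Jc psi a e x) (Jc psi b f x)) (Jc psi c d x)))).

End Defs.
Arguments beta2 {R}.
Arguments beta4 {R}.

(* Differentiating J with the Leibniz rule, the hermiticity of A_mu makes the gauge
   terms of psibar D_mu psi and of (D_mu psi)bar psi cancel in pairs, so that
   C_mu^ab + d_mu J^ab = 2 sum_A psibar^a_A D_mu psi^b_A.  Both sides of the identity
   are then polynomials, with integer coefficients (every component of beta_ab and
   beta_abcd is 0 or +-1), in the 36 odd elements psibar^a_A, psi^a_A, D_mu psi^a_A
   of the Grassmann algebra, which anticommute pairwise and square to zero.  Sorting
   every monomial and keeping track of the sign gives a normal form for such
   polynomials, and for each of the 16 pairs (a, b) both sides have the same normal
   form, which is checked by computation. *)

From Pilot Require Import Defs.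
From HB Require Import structures.
From mathcomp Require Import all_boot all_order all_algebra.
From mathcomp Require Import complex.
From mathcomp Require Import all_classical all_reals all_analysis.
From mathcomp Require Import ring zify.
Import Order.TTheory GRing.Theory Num.Theory.
Local Open Scope ring_scope.
Set Implicit Arguments. Unset Strict Implicit. Unset Printing Implicit Defensive.

(* [Lam R] already carries the pointwise ring structure of finite functions;
   [grass R] is a copy on which [*] will be the Grassmann product [gmul]. *)
Definition grass (R : realType) : Type := Lam R.
HB.instance Definition _ (R : realType) := GRing.Lmodule.on (grass R).

Lemma cardsU_disjoint (T : finType) (A B : {set T}) :
  [disjoint A & B] -> #|A :|: B| = (#|A| + #|B|)%N.
Proof. by move=> /disjoint_setI0 AB0; rewrite cardsU AB0 cards0 subn0. Qed.

Lemma disjoint_setUl (T : finType) (A B D : {set T}) :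
  [disjoint A :|: B & D] = [disjoint A & D] && [disjoint B & D].
Proof. by rewrite -!setI_eq0 finset.setIUl finset.setU_eq0. Qed.

Lemma disjoint_setUr (T : finType) (A B D : {set T}) :
  [disjoint A & B :|: D] = [disjoint A & B] && [disjoint A & D].
Proof. by rewrite -!setI_eq0 finset.setIUr finset.setU_eq0. Qed.

Section Crossings.
Implicit Types S T W : {set Gen}.

Definition crossing_set S T : {set Gen * Gen} :=
  [set p | [&& p.1 \in S, p.2 \in T & (p.2 < p.1)%N]].

Lemma crossing_setUl S T W :
  crossing_set (S :|: T) W = crossing_set S W :|: crossing_set T W.
Proof. by apply/setP => p; rewrite !inE andb_orl. Qed.

Lemma crossing_setUr S T W :
  crossing_set S (T :|: W) = crossing_set S T :|: crossing_set S W.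
Proof. by apply/setP => p; rewrite !inE; case: (p.1 \in S); rewrite ?andb_orl. Qed.

Lemma card_crossing_setUl S T W : [disjoint S & T] ->
  #|crossing_set (S :|: T) W| = (#|crossing_set S W| + #|crossing_set T W|)%N.
Proof.
move=> dST; rewrite crossing_setUl cardsU_disjoint // -setI_eq0; apply/eqP/setP => p.
rewrite !inE; apply/negbTE/negP => /andP[/and3P[pS _ _] /and3P[pT _ _]].
by rewrite (disjointFr dST pS) in pT.
Qed.

Lemma card_crossing_setUr S T W : [disjoint T & W] ->
  #|crossing_set S (T :|: W)| = (#|crossing_set S T| + #|crossing_set S W|)%N.
Proof.
move=> dTW; rewrite crossing_setUr cardsU_disjoint // -setI_eq0; apply/eqP/setP => p.
rewrite !inE; apply/negbTE/negP => /andP[/and3P[_ pT _] /and3P[_ pW _]].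
by rewrite (disjointFr dTW pT) in pW.
Qed.

(* Each pair of [S x T] crosses exactly one way when [S] and [T] are disjoint. *)
Lemma card_crossing_set_sym S T : [disjoint S & T] ->
  (#|crossing_set S T| + #|crossing_set T S|)%N = (#|S| * #|T|)%N.
Proof.
move=> dST; rewrite -cardsX.
rewrite -(card_preimset (crossing_set T S) (can_inj (@swap_pairK Gen Gen))).
have -> : finset.setX S T = crossing_set S T :|: swap_pair @^-1: crossing_set T S.
  apply/setP => p; rewrite !inE /=.
  case pS: (p.1 \in S); case pT: (p.2 \in T) => //=.
  have : p.1 != p.2 by apply: contraTneq pT => <-; rewrite (disjointFr dST pS).
  by rewrite neq_ltn orbC.
rewrite cardsU_disjoint // -setI_eq0; apply/eqP/setP => p; rewrite !inE /=.
by case: ltngtP; rewrite !andbF.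
Qed.

End Crossings.

Section GrassmannAlgebra.
Variable R : realType.
Local Notation C := R[i].
Local Notation L := (grass R).
Implicit Types (x y z : L) (S T U W : {set Gen}).

Lemma scalecE (c z : C) : c *: z = c * z.
Proof. by []. Qed.

Definition gmono S : L := [ffun U => (U == S)%:R].

Lemma gsignE S T : gsign R S T = (-1) ^+ #|crossing_set S T|.
Proof. by []. Qed.

Lemma gmulE x y U : gmul x y U =
  \sum_(S : {set Gen}) \sum_(T : {set Gen} | [disjoint S & T] && (S :|: T == U))
    gsign R S T * x S * y T.
Proof. exact: ffunE. Qed.

Lemma gmulDl : left_distributive (@gmul R : L -> L -> L) +%R.
Proof.
move=> x y z; apply/ffunP => U; rewrite gmulE [in RHS]ffunE !gmulE -big_split.
apply: eq_bigr => S _; rewrite -big_split; apply: eq_bigr => T _.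
by rewrite ffunE mulrDr mulrDl.
Qed.

Lemma gmulDr : right_distributive (@gmul R : L -> L -> L) +%R.
Proof.
move=> x y z; apply/ffunP => U; rewrite gmulE [in RHS]ffunE !gmulE -big_split.
apply: eq_bigr => S _; rewrite -big_split; apply: eq_bigr => T _.
by rewrite ffunE mulrDr.
Qed.

Lemma gmulZl (c : C) x y : c *: (gmul x y : L) = gmul (c *: x) y.
Proof.
apply/ffunP => U; rewrite [in LHS]ffunE !gmulE scaler_sumr; apply: eq_bigr => S _.
by rewrite scaler_sumr; apply: eq_bigr => T _; rewrite ffunE !scalecE !mulrA [c * _]mulrC.
Qed.

Lemma gmulZr (c : C) x y : c *: (gmul x y : L) = gmul x (c *: y).
Proof.
apply/ffunP => U; rewrite [in LHS]ffunE !gmulE scaler_sumr; apply: eq_bigr => S _.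
by rewrite scaler_sumr; apply: eq_bigr => T _; rewrite ffunE !scalecE mulrCA.
Qed.

Lemma gmul0l y : gmul 0 y = 0 :> L.
Proof. by apply: (addrI (gmul 0 y)); rewrite -gmulDl !addr0. Qed.

Lemma gmul0r x : gmul x 0 = 0 :> L.
Proof. by apply: (addrI (gmul x 0)); rewrite -gmulDr !addr0. Qed.

Lemma gmul_suml (I : finType) (F : I -> L) y :
  gmul (\sum_i F i) y = \sum_i gmul (F i) y.
Proof.
by elim: (index_enum I) => [|i r IH]; rewrite ?big_nil ?gmul0l // !big_cons gmulDl IH.
Qed.

Lemma gmul_sumr (I : finType) (F : I -> L) x :
  gmul x (\sum_i F i) = \sum_i gmul x (F i).
Proof.
by elim: (index_enum I) => [|i r IH]; rewrite ?big_nil ?gmul0r // !big_cons gmulDr IH.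
Qed.

Lemma gmono_expansion x : x = \sum_(S : {set Gen}) (x S *: gmono S : L).
Proof.
apply/ffunP => U; rewrite sum_ffunE (bigD1 U) //= big1 => [|S /negPf SU].
  by rewrite !ffunE eqxx scalecE mulr1 addr0.
by rewrite !ffunE eq_sym SU scalecE mulr0.
Qed.

Lemma gmul_mono S T : gmul (gmono S) (gmono T) =
  if [disjoint S & T] then gsign R S T *: gmono (S :|: T) else 0.
Proof.
apply/ffunP => U; rewrite gmulE (bigD1 S) //= [X in _ + X]big1 => [|S' /negPf S'S]; last first.
  by rewrite big1 // => T' _; rewrite ffunE S'S mulr0 mul0r.
rewrite addr0 big_mkcond (bigD1 T) //= [X in _ + X]big1 => [|T' /negPf T'T]; last first.
  by case: ifP; rewrite // !ffunE T'T mulr0.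
rewrite !ffunE !eqxx addr0; case: [disjoint S & T] => /=; last by rewrite ffunE.
by rewrite !ffunE eq_sym scalecE; case: (U == S :|: T); rewrite /= ?mulr1 ?mulr0.
Qed.

Lemma gmulA_mono3 S T W :
  gmul (gmul (gmono S) (gmono T)) (gmono W) = gmul (gmono S) (gmul (gmono T) (gmono W)).
Proof.
rewrite [gmul (gmono S) _]gmul_mono [gmul (gmono T) _]gmul_mono.
case dST: [disjoint S & T]; last first.
  rewrite gmul0l; case: [disjoint T & W]; last by rewrite gmul0r.
  by rewrite -gmulZr gmul_mono disjoint_setUr dST /= scaler0.
case dTW: [disjoint T & W]; last first.
  by rewrite gmul0r -gmulZl gmul_mono disjoint_setUl dTW andbF /= scaler0.
rewrite -gmulZl -gmulZr !gmul_mono disjoint_setUl disjoint_setUr dST dTW andbT /=.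
case: [disjoint S & W]; last by rewrite !scaler0.
rewrite !scalerA finset.setUA !gsignE -!exprD.
by rewrite (card_crossing_setUl W dST) (card_crossing_setUr S dTW) [in RHS]addnC addnA.
Qed.

Lemma gmulA_mono2 S T z :
  gmul (gmul (gmono S) (gmono T)) z = gmul (gmono S) (gmul (gmono T) z).
Proof.
rewrite (gmono_expansion z) gmul_sumr [gmul (gmono T) _]gmul_sumr gmul_sumr.
by apply: eq_bigr => W _; rewrite -gmulZr -gmulZr -gmulZr gmulA_mono3.
Qed.

Lemma gmulA_mono1 S y z :
  gmul (gmul (gmono S) y) z = gmul (gmono S) (gmul y z).
Proof.
rewrite (gmono_expansion y) gmul_sumr gmul_suml gmul_suml gmul_sumr.
apply: eq_bigr => T _; rewrite -gmulZr; apply: etrans (esym (gmulZl _ _ _)) _.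
by rewrite -gmulZl -gmulZr gmulA_mono2.
Qed.

Lemma gmulA : associative (@gmul R : L -> L -> L).
Proof.
move=> x y z; rewrite (gmono_expansion x) gmul_suml gmul_suml gmul_suml.
by apply: eq_bigr => S _; rewrite -gmulZl -gmulZl -gmulZl gmulA_mono1.
Qed.

Lemma gone_gmono : gone R = gmono finset.set0.
Proof. by []. Qed.

Lemma gmul_mono_set0l T : gmul (gmono finset.set0) (gmono T) = gmono T.
Proof.
rewrite gmul_mono -setI_eq0 finset.set0I eqxx gsignE finset.set0U.
have -> : crossing_set finset.set0 T = finset.set0 by apply/setP => p; rewrite !inE.
by rewrite cards0 scale1r.
Qed.

Lemma gmul_mono_set0r S : gmul (gmono S) (gmono finset.set0) = gmono S.
Proof.
rewrite gmul_mono -setI_eq0 finset.setI0 eqxx gsignE finset.setU0.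
have -> : crossing_set S finset.set0 = finset.set0 by apply/setP => p; rewrite !inE andbF.
by rewrite cards0 scale1r.
Qed.

Lemma gmul1l : left_id (gone R : L) (@gmul R).
Proof.
move=> x; rewrite [in LHS](gmono_expansion x) [in RHS](gmono_expansion x) gmul_sumr.
by apply: eq_bigr => T _; rewrite -gmulZr gone_gmono gmul_mono_set0l.
Qed.

Lemma gmul1r : right_id (gone R : L) (@gmul R).
Proof.
move=> x; rewrite [in LHS](gmono_expansion x) [in RHS](gmono_expansion x) gmul_suml.
by apply: eq_bigr => S _; rewrite -gmulZl gone_gmono gmul_mono_set0r.
Qed.

Lemma gone_neq0 : (gone R : L) != 0.
Proof.
by apply/eqP => /ffunP/(_ finset.set0); rewrite !ffunE eqxx; apply/eqP; rewrite oner_eq0.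
Qed.

End GrassmannAlgebra.

HB.instance Definition _ (R : realType) :=
  GRing.Zmodule_isNzRing.Build (grass R) (@gmulA R) (@gmul1l R) (@gmul1r R)
    (@gmulDl R) (@gmulDr R) (@gone_neq0 R).
HB.instance Definition _ (R : realType) :=
  GRing.Lmodule_isLalgebra.Build R[i] (grass R) (@gmulZl R).
HB.instance Definition _ (R : realType) :=
  GRing.Lalgebra_isAlgebra.Build R[i] (grass R) (@gmulZr R).

Section Parity.
Variable R : realType.
Local Notation C := R[i].
Local Notation L := (grass R).
Local Notation gmono := (gmono R).
Implicit Types (x y : L) (S T : {set Gen}).

Lemma grass_mulE x y : x * y = gmul x y.
Proof. by []. Qed.

Lemma mul_gmonoE x y :
  x * y = \sum_(S : {set Gen}) \sum_(T : {set Gen}) (x S * y T) *: (gmono S * gmono T).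
Proof.
rewrite {1}(gmono_expansion x) {1}(gmono_expansion y) mulr_suml.
apply: eq_bigr => S _; rewrite mulr_sumr; apply: eq_bigr => T _.
by rewrite -scalerAl -scalerAr scalerA.
Qed.

Lemma gmono_comm S T :
  gmono T * gmono S = (-1) ^+ (#|S| * #|T|) *: (gmono S * gmono T).
Proof.
rewrite !grass_mulE !gmul_mono disjoint_sym; case dST: [disjoint S & T]; last by rewrite scaler0.
rewrite scalerA finset.setUC !gsignE -(card_crossing_set_sym dST) -exprD addnAC addnn.
by rewrite exprD -mul2n exprM sqrrN !expr1n mul1r.
Qed.

Definition has_parity (p : bool) x := forall S, odd #|S| != p -> x S = 0.

Lemma is_oddE (x : Lam R) : is_odd x <-> has_parity true (x : L).
Proof. by split=> h S hS; apply: h; move: hS; case: (odd _). Qed.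

Lemma has_parityD p x y : has_parity p x -> has_parity p y -> has_parity p (x + y).
Proof. by move=> hx hy S hS; rewrite ffunE hx // hy // addr0. Qed.

Lemma has_parityZ p (c : C) x : has_parity p x -> has_parity p (c *: x).
Proof. by move=> hx S hS; rewrite ffunE hx // scaler0. Qed.

Lemma has_parity_sum p I (r : seq I) (P : pred I) (F : I -> L) :
  (forall i, P i -> has_parity p (F i)) -> has_parity p (\sum_(i <- r | P i) F i).
Proof.
by move=> h; apply: big_ind => //; [move=> S _; rewrite ffunE | exact: has_parityD].
Qed.

Lemma has_parityM p q x y :
  has_parity p x -> has_parity q y -> has_parity (p (+) q) (x * y).
Proof.
move=> hx hy U hU; rewrite grass_mulE gmulE big1 // => S _; rewrite big1 // => T /andP[dST /eqP UE].
have [hS|hS] := eqVneq (odd #|S|) p; last by rewrite hx // mulr0 mul0r.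
have [hT|hT] := eqVneq (odd #|T|) q; last by rewrite hy // mulr0.
by move: hU; rewrite -UE cardsU_disjoint // oddD hS hT eqxx.
Qed.

Lemma has_parity_gmono S : has_parity (odd #|S|) (gmono S).
Proof. by move=> U; rewrite ffunE; case: (U =P S) => [->|_ _]; rewrite ?eqxx. Qed.

Lemma mul_odd_anticomm x y :
  has_parity true x -> has_parity true y -> x * y = - (y * x).
Proof.
move=> hx hy; rewrite (mul_gmonoE y) exchange_big /= -sumrN mul_gmonoE.
apply: eq_bigr => S _; rewrite -sumrN; apply: eq_bigr => T _.
have [oS|eS] := boolP (odd #|S|); last first.
  by rewrite hx ?mul0r ?mulr0 ?scale0r ?oppr0 // (negbTE eS).
have [oT|eT] := boolP (odd #|T|); last first.
  by rewrite hy ?mul0r ?mulr0 ?scale0r ?oppr0 // (negbTE eT).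
by rewrite (gmono_comm T) -signr_odd oddM oS oT expr1 scaleN1r scalerN mulrC.
Qed.

Lemma mul_odd_sqr x : has_parity true x -> x * x = 0.
Proof.
move=> hx; apply: (@scalerI _ _ (2%:R : C)); first by rewrite pnatr_eq0.
by rewrite scaler0 scaler_nat mulr2n {1}(mul_odd_anticomm hx hx) addNr.
Qed.

End Parity.

Section Conjugation.
Variable R : realType.
Local Notation C := R[i].
Local Notation L := (grass R).

Lemma gconjE (x : L) : gconj x = \sum_(S : {set Gen}) conjc (x S) *: (conj_mono R S : L).
Proof. by []. Qed.

Lemma gconjB : zmod_morphism (@gconj R : L -> L).
Proof.
move=> x y; rewrite !gconjE -sumrB; apply: eq_bigr => S _.
by rewrite !ffunE rmorphB scalerBl.
Qed.

End Conjugation.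

HB.instance Definition _ (R : realType) :=
  GRing.isZmodMorphism.Build (grass R) (grass R) (@gconj R) (@gconjB R).

Section ConjugationTheory.
Variable R : realType.
Local Notation C := R[i].
Local Notation L := (grass R).

Lemma gconjD (x y : L) : gconj (x + y) = gconj x + gconj y.
Proof. exact: raddfD. Qed.

Lemma gconj_sum I (r : seq I) (P : pred I) (F : I -> L) :
  gconj (\sum_(i <- r | P i) F i) = \sum_(i <- r | P i) gconj (F i).
Proof. exact: raddf_sum. Qed.

Lemma gconjZ (c : C) (x : L) : gconj (c *: x) = conjc c *: gconj x.
Proof.
rewrite !gconjE scaler_sumr; apply: eq_bigr => S _.
by rewrite ffunE scalecE rmorphM scalerA.
Qed.

Lemma has_parity_conj_mono (S : {set Gen}) : has_parity (odd #|S|) (conj_mono R S : L).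
Proof.
rewrite /conj_mono cardE -size_rev; elim: (rev (enum S)) => [|i s IH] /=.
  by have := @has_parity_gmono R finset.set0; rewrite cards0.
by have := has_parityM (@has_parity_gmono R [set gbar i]) IH; rewrite cards1.
Qed.

Lemma has_parity_gconj p (x : L) : has_parity p x -> has_parity p (gconj x).
Proof.
move=> hx; rewrite gconjE; apply: has_parity_sum => S _.
have [<-|hS] := eqVneq (odd #|S|) p; first exact/has_parityZ/has_parity_conj_mono.
by rewrite hx // conjc0 scale0r => U _; rewrite ffunE.
Qed.

End ConjugationTheory.

Section ComplexDerivative.
Variables (R : realType) (x v : 'rV[R]_4).
Local Notation C := R[i].
Local Notation V := 'rV[R]_4.
Implicit Types (f g : V -> C) (df dg : C).

Definition is_cderive f df :=
  is_derive x v (fun y => complex.Re (f y)) (complex.Re df) /\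
  is_derive x v (fun y => complex.Im (f y)) (complex.Im df).

Lemma is_cderive_cst (c : C) : is_cderive (fun=> c) 0.
Proof. by split; exact: is_derive_cst. Qed.

Lemma is_cderiveD f g df dg :
  is_cderive f df -> is_cderive g dg -> is_cderive (fun y => f y + g y) (df + dg).
Proof.
move: df dg => [? ?] [? ?] [fRe fIm] [gRe gIm]; split.
  have := is_deriveD fRe gRe; rewrite !fctE; congr is_derive.
  by apply/funext => y; case: (f y); case: (g y).
have := is_deriveD fIm gIm; rewrite !fctE; congr is_derive.
by apply/funext => y; case: (f y); case: (g y).
Qed.

Lemma is_cderive_sum I (r : seq I) (P : pred I) (F : I -> V -> C) (dF : I -> C) :
  (forall i, is_cderive (F i) (dF i)) ->
  is_cderive (fun y => \sum_(i <- r | P i) F i y) (\sum_(i <- r | P i) dF i).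
Proof.
move=> hF; elim: r => [|i r IH].
  by under eq_fun do rewrite big_nil; rewrite big_nil; exact: is_cderive_cst.
under eq_fun do rewrite big_cons; rewrite big_cons.
by case: (P i) => //; exact: is_cderiveD.
Qed.

Lemma is_cderiveM f g df dg : is_cderive f df -> is_cderive g dg ->
  is_cderive (fun y => f y * g y) (df * g x + f x * dg).
Proof.
move: df dg => [? ?] [? ?] [fRe fIm] [gRe gIm]; split.
  have := is_deriveB (is_deriveM fRe gRe) (is_deriveM fIm gIm); rewrite !fctE.
  congr is_derive; first by apply/funext => y; case: (f y); case: (g y).
  by case: (f x) (g x) => [? ?] [? ?]; rewrite /= /GRing.scale /=; ring.
have := is_deriveD (is_deriveM fRe gIm) (is_deriveM fIm gRe); rewrite !fctE.
congr is_derive; first by apply/funext => y; case: (f y); case: (g y).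
by case: (f x) (g x) => [? ?] [? ?]; rewrite /= /GRing.scale /=; ring.
Qed.

Lemma is_cderive_conj f df : is_cderive f df -> is_cderive (fun y => conjc (f y)) (conjc df).
Proof.
move: df => [? ?] [fRe fIm]; split.
  by congr is_derive: fRe; apply/funext => y; case: (f y).
have := is_deriveN fIm; rewrite !fctE; congr is_derive.
by apply/funext => y; case: (f y).
Qed.

End ComplexDerivative.

Section GrassmannDerivative.
Variables (R : realType) (x v : 'rV[R]_4).
Local Notation V := 'rV[R]_4.
Local Notation L := (grass R).

Definition is_gderive (F : V -> L) (dF : L) :=
  forall S, is_cderive x v (fun y => F y S) (dF S).

Lemma is_gderive_sum I (r : seq I) (P : pred I) (F : I -> V -> L) (dF : I -> L) :
  (forall i, is_gderive (F i) (dF i)) ->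
  is_gderive (fun y => \sum_(i <- r | P i) F i y) (\sum_(i <- r | P i) dF i).
Proof.
move=> hF S; under eq_fun do rewrite sum_ffunE.
by rewrite sum_ffunE; apply: is_cderive_sum => i; exact: hF.
Qed.

Lemma is_gderiveM F G dF dG : is_gderive F dF -> is_gderive G dG ->
  is_gderive (fun y => F y * G y) (dF * G x + F x * dG).
Proof.
move=> hF hG U; under eq_fun do rewrite grass_mulE gmulE.
rewrite ffunE !grass_mulE !gmulE -big_split; apply: is_cderive_sum => S.
rewrite -big_split; apply: is_cderive_sum => T.
have := is_cderiveM (is_cderiveM (is_cderive_cst x v (gsign R S T)) (hF S)) (hG T).
by rewrite mul0r add0r; apply.
Qed.

Lemma is_gderive_conj F dF : is_gderive F dF -> is_gderive (fun y => gconj (F y)) (gconj dF).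
Proof.
move=> hF U; under eq_fun do rewrite gconjE sum_ffunE.
rewrite gconjE sum_ffunE; apply: is_cderive_sum => S.
under eq_fun do rewrite ffunE scalecE.
rewrite ffunE scalecE.
have := is_cderiveM (is_cderive_conj (hF S)) (is_cderive_cst x v (conj_mono R S U)).
by rewrite mulr0 addr0; apply.
Qed.

End GrassmannDerivative.

Lemma dL_is_gderive (R : realType) (mu : 'I_4) (F : 'rV[R]_4 -> Lam R) x (dF : grass R) :
  is_gderive x (evec R mu) F dF -> dL mu F x = dF.
Proof.
move=> hF; apply/ffunP => S; rewrite ffunE.
by have [[_ ->] [_ ->]] := hF S; case: (dF S).
Qed.

Lemma diff_field_is_gderive (R : realType) (mu : 'I_4) (F : 'rV[R]_4 -> Lam R) x :
  diff_field F -> is_gderive x (evec R mu) F (dL mu F x).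
Proof.
by move=> hF S; have [hRe hIm] := hF x mu S; rewrite ffunE; split; exact: derivableP.
Qed.

Lemma has_parity_dL (R : realType) (mu : 'I_4) (F : 'rV[R]_4 -> Lam R) x p :
  (forall y, has_parity p (F y : grass R)) -> has_parity p (dL mu F x : grass R).
Proof.
move=> hF S hS; rewrite ffunE.
have -> : (fun y => complex.Re (F y S)) = cst 0 by apply/funext => y; rewrite hF.
have -> : (fun y => complex.Im (F y S)) = cst 0 by apply/funext => y; rewrite hF.
by rewrite derive_cst.
Qed.

Section GaugeInvariants.
Variables (R : realType) (g : R) (Amu : Gauge R) (psi : Field R).
Variables (x : 'rV[R]_4) (mu : 'I_4).
Hypothesis Amu_herm : forall A B : 'I_3, conjc (Amu mu x A B) = Amu mu x B A.
Hypothesis psi_diff : forall (a : 'I_4) (A : 'I_3), diff_field (psi a A).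
Local Notation C := R[i].
Local Notation L := (grass R).
Local Notation psib a A := (gconj (psi a A x) : L).
Local Notation dpsi a A := (dL mu (psi a A) x : L).

Lemma dL_Jc a b : dL mu (Jc psi a b) x =
  \sum_(A < 3) ((gconj (dpsi a A) : L) * psi b A x + psib a A * dpsi b A).
Proof.
apply: dL_is_gderive; apply: is_gderive_sum => A.
exact: (@is_gderiveM _ _ _ (fun y => gconj (psi a A y)) (psi b A))
  (is_gderive_conj (diff_field_is_gderive mu x (psi_diff a A)))
  (diff_field_is_gderive mu x (psi_diff b A)).
Qed.

Lemma has_parity_Dpsi b A : (forall B y, has_parity true (psi b B y : L)) ->
  has_parity true (Dpsi g Amu psi mu b A x : L).
Proof.
move=> psi_odd; apply: has_parityD; first by apply: has_parity_dL.
by apply: has_parity_sum => B _; apply: has_parityZ.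
Qed.

Let gauge A B : C := iC R * Complex g 0 * Amu mu x A B.

Let conj_gauge A B : conjc (gauge A B) = - gauge B A.
Proof.
rewrite /gauge /iC -Amu_herm; case: (Amu mu x B A) => p q /=.
by apply/eqP; rewrite eq_complex /=; apply/andP; split; apply/eqP; ring.
Qed.

Lemma DpsiE c A :
  Dpsi g Amu psi mu c A x = dpsi c A + \sum_(B < 3) gauge A B *: (psi c B x : L).
Proof. by []. Qed.

Lemma gconj_Dpsi c A : gconj (Dpsi g Amu psi mu c A x) =
  gconj (dpsi c A) - \sum_(B < 3) gauge B A *: psib c B.
Proof.
rewrite DpsiE gconjD gconj_sum -sumrN; congr (_ + _).
by apply: eq_bigr => B _; rewrite gconjZ conj_gauge scaleNr.
Qed.

Lemma Kc_psibar_Dpsi a b : Kc g Amu psi mu a b x =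
  \sum_(A < 3) (2%:R : C) *: (psib a A * Dpsi g Amu psi mu b A x).
Proof.
pose G A := \sum_(B < 3) gauge A B *: (psib a A * psi b B x).
have psib_Dpsi A : psib a A * Dpsi g Amu psi mu b A x = psib a A * dpsi b A + G A.
  rewrite DpsiE mulrDr mulr_sumr; congr (_ + _).
  by rewrite /G; under eq_bigr do rewrite -scalerAr.
have Dpsib_psi A : (gconj (Dpsi g Amu psi mu a A x) : L) * psi b A x =
    (gconj (dpsi a A) : L) * psi b A x - \sum_(B < 3) gauge B A *: (psib a B * psi b A x).
  rewrite gconj_Dpsi mulrBl; congr (_ - _).
  by rewrite mulr_suml; apply: eq_bigr => B _; rewrite -scalerAl.
have G_exchange : \sum_(A < 3) \sum_(B < 3) gauge B A *: (psib a B * psi b A x) =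
    \sum_(A < 3) G A by rewrite /G; exact: exchange_big.
have rearrange (V : zmodType) (p q s t : V) : p + s - (q - t) + (q + p) = p *+ 2 + s + t.
  by rewrite opprB mulr2n -!addrA addKr; congr (_ + _); rewrite addrA addrC.
have -> : Kc g Amu psi mu a b x = \sum_(A < 3)
    (psib a A * Dpsi g Amu psi mu b A x - (gconj (Dpsi g Amu psi mu a A x) : L) * psi b A x)
    + dL mu (Jc psi a b) x by [].
rewrite dL_Jc -big_split.
under eq_bigr do rewrite /= psib_Dpsi Dpsib_psi (rearrange L).
rewrite big_split /= G_exchange big_split /= -addrA -mulr2n -sumrMnl -big_split /=.
by apply: eq_bigr => A _; rewrite psib_Dpsi scaler_nat mulrnDl.
Qed.

End GaugeInvariants.

(* A word is a list of generator indices, standing for their product.  [word_insert]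
   and [word_sort] return the sorted word together with the parity of the permutation
   used, or [None] when an index is repeated and the product vanishes.  A [gpoly] is a
   list of (integer coefficient, sorted word) pairs, kept sorted by [word_lt]. *)
Fixpoint word_insert (i : nat) (w : seq nat) : option (bool * seq nat) :=
  match w with
  | [::] => Some (false, [:: i])
  | j :: w' =>
      if (i < j)%N then Some (false, i :: w)
      else if i == j then None
      else if word_insert i w' is Some (s, u) then Some (~~ s, j :: u) else None
  end.

Fixpoint word_sort (w : seq nat) : option (bool * seq nat) :=
  match w with
  | [::] => Some (false, [::])
  | i :: w' =>
      if word_sort w' is Some (s, u) then
        if word_insert i u is Some (s', u') then Some (s (+) s', u') else None
      else None
  end.

Fixpoint word_lt (u w : seq nat) : bool :=
  match u, w with
  | [::], [::] => false
  | [::], _ => true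
  | _, [::] => false
  | i :: u', j :: w' => (i < j)%N || (i == j) && word_lt u' w'
  end.

Definition gpoly := seq (int * seq nat).

Fixpoint gpoly_ins (c : int) (w : seq nat) (p : gpoly) : gpoly :=
  match p with
  | [::] => [:: (c, w)]
  | (c', w') :: p' =>
      if w == w' then (if c + c' == 0 then p' else (c + c', w') :: p')
      else if word_lt w w' then (c, w) :: p
      else (c', w') :: gpoly_ins c w p'
  end.

Fixpoint gpoly_add (p : gpoly) : gpoly -> gpoly :=
  match p with
  | [::] => id
  | (c, w) :: p' =>
      fix add_p (q : gpoly) : gpoly :=
        match q with
        | [::] => p
        | (c', w') :: q' =>
            if w == w' then
              (if c + c' == 0 then gpoly_add p' q' else (c + c', w) :: gpoly_add p' q')
            else if word_lt w w' then (c, w) :: gpoly_add p' q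
            else (c', w') :: add_p q'
        end
  end.

Definition gpoly_mul_term (t : int * seq nat) (q : gpoly) : gpoly :=
  foldr (fun u acc =>
    if word_sort (t.2 ++ u.2) is Some (s, w) then gpoly_ins ((-1) ^+ s * t.1 * u.1) w acc
    else acc) [::] q.

Definition gpoly_mul (p q : gpoly) : gpoly :=
  foldr (fun t acc => gpoly_add (gpoly_mul_term t q) acc) [::] p.

Definition gpoly_scale (c : int) (p : gpoly) : gpoly := [seq (c * t.1, t.2) | t <- p].

Section WordEvaluation.
Variables (A : pzRingType) (v : nat -> A).
Hypothesis v_anticomm : forall i j, v i * v j = - (v j * v i).
Hypothesis v_sqr : forall i, v i * v i = 0.

Definition word_eval (w : seq nat) : A := \prod_(i <- w) v i.

Definition gpoly_eval (p : gpoly) : A := \sum_(t <- p) word_eval t.2 *~ t.1.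

Lemma word_eval_cat u w : word_eval (u ++ w) = word_eval u * word_eval w.
Proof. by rewrite /word_eval big_cat. Qed.

Lemma word_insert_sound i w : v i * word_eval w =
  if word_insert i w is Some (s, u) then word_eval u *~ (-1) ^+ s else 0.
Proof.
rewrite /word_eval; elim: w => [|j w IH] /=.
  by rewrite big_nil big_seq1 mulr1 expr0 mulr1z.
rewrite big_cons; case: ifP => _; first by rewrite !big_cons expr0 mulr1z.
case: eqP => [<-|_]; first by rewrite mulrA v_sqr mul0r.
rewrite mulrA v_anticomm mulNr -mulrA IH.
case: word_insert => [[s u]|]; last by rewrite mulr0 oppr0.
by rewrite big_cons mulrzAr signrN mulrNz.
Qed.

Lemma word_sort_sound w : word_eval w =
  if word_sort w is Some (s, u) then word_eval u *~ (-1) ^+ s else 0.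
Proof.
elim: w => [|i w IH] /=; first by rewrite expr0 mulr1z.
rewrite /word_eval big_cons -/(word_eval w) IH.
case: word_sort => [[s u]|]; last by rewrite mulr0.
rewrite mulrzAr word_insert_sound; case: word_insert => [[s' u']|]; last by rewrite mul0rz.
by rewrite -mulrzA signr_addb mulrC.
Qed.

Lemma gpoly_eval_cons c w p : gpoly_eval ((c, w) :: p) = word_eval w *~ c + gpoly_eval p.
Proof. by rewrite /gpoly_eval big_cons. Qed.

Lemma gpoly_ins_sound c w p : gpoly_eval (gpoly_ins c w p) = word_eval w *~ c + gpoly_eval p.
Proof.
elim: p => [|[c' w'] p IH] /=; first by rewrite gpoly_eval_cons.
case: eqP => [<-|_].
  case: eqP => [c0|_]; last by rewrite !gpoly_eval_cons mulrzDr addrA.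
  by rewrite gpoly_eval_cons addrA -mulrzDr c0 mulr0z add0r.
case: ifP => _; first by rewrite !gpoly_eval_cons.
by rewrite !gpoly_eval_cons IH addrCA.
Qed.

Lemma gpoly_add_sound p q : gpoly_eval (gpoly_add p q) = gpoly_eval p + gpoly_eval q.
Proof.
elim: p q => [|[c w] p IH] q /=; first by rewrite /gpoly_eval big_nil add0r.
elim: q => [|[c' w'] q IHq]; first by rewrite /gpoly_eval big_nil addr0.
case: eqP => [<-|_].
  case: eqP => [c0|_]; last by rewrite !gpoly_eval_cons IH mulrzDr addrACA.
  by rewrite IH !gpoly_eval_cons addrACA -mulrzDr c0 mulr0z add0r.
case: ifP => _; first by rewrite !gpoly_eval_cons IH gpoly_eval_cons addrA.
by rewrite !gpoly_eval_cons IHq gpoly_eval_cons addrCA.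
Qed.

Lemma gpoly_mul_term_sound c w q :
  gpoly_eval (gpoly_mul_term (c, w) q) = word_eval w *~ c * gpoly_eval q.
Proof.
elim: q => [|[c' w'] q IH] /=; first by rewrite /gpoly_eval !big_nil mulr0.
rewrite gpoly_eval_cons mulrDr -IH /gpoly_mul_term /=.
rewrite mulrzAl mulrzAr -word_eval_cat word_sort_sound -!mulrzA.
case: word_sort => [[s u]|]; last by rewrite mul0rz add0r.
by rewrite gpoly_ins_sound -!mulrzA [c' * c]mulrC mulrA.
Qed.

Lemma gpoly_mul_sound p q : gpoly_eval (gpoly_mul p q) = gpoly_eval p * gpoly_eval q.
Proof.
elim: p => [|[c w] p IH] /=; first by rewrite /gpoly_eval !big_nil mul0r.
by rewrite gpoly_add_sound gpoly_mul_term_sound IH gpoly_eval_cons mulrDl.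
Qed.

Lemma gpoly_scale_sound c p : gpoly_eval (gpoly_scale c p) = gpoly_eval p *~ c.
Proof.
rewrite /gpoly_eval big_map mulrz_suml; apply: eq_bigr => t _.
by rewrite mulrC mulrzA.
Qed.

End WordEvaluation.

(* Enumerations of ['I_4] and ['I_3] that [vm_compute] can evaluate, unlike [enum]. *)
Definition ord4_enum : seq 'I_4 :=
  [:: @Ordinal 4 0 isT; @Ordinal 4 1 isT; @Ordinal 4 2 isT; @Ordinal 4 3 isT].
Definition ord3_enum : seq 'I_3 := [:: @Ordinal 3 0 isT; @Ordinal 3 1 isT; @Ordinal 3 2 isT].

Lemma mem_ord4_enum (a : 'I_4) : a \in ord4_enum.
Proof. by case: a => [[|[|[|[|m]]]] Hm]. Qed.

Lemma big_ord4_enum (M : nmodType) (F : 'I_4 -> M) :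
  \sum_(i < 4) F i = \sum_(i <- ord4_enum) F i.
Proof.
rewrite !big_ord_recl big_ord0 !big_cons big_nil.
by congr (F _ + (F _ + (F _ + (F _ + _)))); apply: val_inj.
Qed.

Lemma big_ord3_enum (M : nmodType) (F : 'I_3 -> M) :
  \sum_(i < 3) F i = \sum_(i <- ord3_enum) F i.
Proof.
rewrite !big_ord_recl big_ord0 !big_cons big_nil.
by congr (F _ + (F _ + (F _ + _))); apply: val_inj.
Qed.

Definition gauss := (int * int)%type.
Definition gauss_add (z w : gauss) : gauss := (z.1 + w.1, z.2 + w.2).
Definition gauss_mul (z w : gauss) : gauss := (z.1 * w.1 - z.2 * w.2, z.1 * w.2 + z.2 * w.1).
Definition gauss_conj (z : gauss) : gauss := (z.1, - z.2).
Definition gauss_opp (z : gauss) : gauss := (- z.1, - z.2).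
Definition gauss_sum4 (F : 'I_4 -> gauss) : gauss :=
  foldr (fun i => gauss_add (F i)) (0, 0) ord4_enum.

Definition sigma_gauss (mu : 'I_4) (i j : nat) : gauss :=
  match nat_of_ord mu, i, j with
  | 0, 0, 0 | 0, 1, 1 | 1, 0, 1 | 1, 1, 0 | 3, 0, 0 => (1, 0)
  | 2, 0, 1 => (0, -1) | 2, 1, 0 => (0, 1) | 3, 1, 1 => (-1, 0)
  | _, _, _ => (0, 0)
  end.
Definition sigmat_gauss (mu : 'I_4) (i j : nat) : gauss :=
  if nat_of_ord mu == 0%N then sigma_gauss mu i j else gauss_opp (sigma_gauss mu i j).
Definition gamma_gauss (mu a b : 'I_4) : gauss :=
  if ((a < 2) && (2 <= b))%N then sigmat_gauss mu a (b - 2)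
  else if ((2 <= a) && (b < 2))%N then sigma_gauss mu (a - 2) b
  else (0, 0).
Definition eps2_gauss (i j : nat) : gauss :=
  match i, j with 0, 1 => (1, 0) | 1, 0 => (-1, 0) | _, _ => (0, 0) end.
Definition eps4_gauss (a b : 'I_4) : gauss :=
  if ((a < 2) && (b < 2))%N then eps2_gauss a b
  else if ((2 <= a) && (2 <= b))%N then gauss_opp (eps2_gauss (a - 2) (b - 2))
  else (0, 0).
Definition gamlow_gauss (mu c b : 'I_4) : gauss :=
  gauss_sum4 (fun a => gauss_mul (gamma_gauss mu a b) (eps4_gauss a c)).
Definition eta_gauss (mu nu : 'I_4) : gauss :=
  if mu == nu then (if nat_of_ord mu == 0%N then (1, 0) else (-1, 0)) else (0, 0).

(* Twice beta_{abcd}; the factor 1/2 is restored in [beta4_intE]. *)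
Definition beta4_gauss (a b c d : 'I_4) : gauss :=
  gauss_sum4 (fun mu => gauss_mul
    (gauss_conj (gauss_sum4 (fun nu => gauss_mul (eta_gauss mu nu) (gamlow_gauss nu a b))))
    (gamlow_gauss mu c d)).

Definition beta4_int (a b c d : 'I_4) : int :=
  match nat_of_ord a, nat_of_ord b, nat_of_ord c, nat_of_ord d with
  | 0, 2, 0, 2 | 0, 2, 2, 0 | 0, 3, 1, 2 | 0, 3, 2, 1 | 1, 2, 0, 3 | 1, 2, 3, 0
  | 1, 3, 1, 3 | 1, 3, 3, 1 | 2, 0, 0, 2 | 2, 0, 2, 0 | 2, 1, 0, 3 | 2, 1, 3, 0
  | 3, 0, 1, 2 | 3, 0, 2, 1 | 3, 1, 1, 3 | 3, 1, 3, 1 => -1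
  | _, _, _, _ => 0
  end.

Definition beta2_int (a b : 'I_4) : int :=
  (((a < 2) && (2 <= b) && (nat_of_ord a == b - 2)) ||
   ((2 <= a) && (b < 2) && (a - 2 == nat_of_ord b)))%N.

Lemma beta4_gauss_even : all (fun a => all (fun b => all (fun c => all (fun d =>
    beta4_gauss a b c d == (2 * beta4_int a b c d, 0)) ord4_enum) ord4_enum) ord4_enum)
    ord4_enum.
Proof. by vm_compute. Qed.


Section GaussianToComplex.
Variable R : realType.
Local Notation C := R[i].

Definition gauss_to_C (z : gauss) : C := Complex z.1%:~R z.2%:~R.

Lemma gauss_to_C_add z w : gauss_to_C (gauss_add z w) = gauss_to_C z + gauss_to_C w.
Proof. by rewrite /gauss_to_C /= !intrD. Qed.

Lemma gauss_to_C_mul z w : gauss_to_C (gauss_mul z w) = gauss_to_C z * gauss_to_C w.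
Proof. by rewrite /gauss_to_C /= !intrD intrN !intrM. Qed.

Lemma gauss_to_C_conj z : gauss_to_C (gauss_conj z) = conjc (gauss_to_C z).
Proof. by rewrite /gauss_to_C /= intrN. Qed.

Lemma gauss_to_C_opp z : gauss_to_C (gauss_opp z) = - gauss_to_C z.
Proof. by rewrite /gauss_to_C /= !intrN. Qed.

Lemma gauss_to_C_sum4 F : gauss_to_C (gauss_sum4 F) = \sum_(i < 4) gauss_to_C (F i).
Proof.
rewrite big_ord4_enum /gauss_sum4 !big_cons big_nil /= !gauss_to_C_add.
by rewrite /gauss_to_C /= addr0.
Qed.

Lemma sigm_gauss_to_C mu i j : sigm R mu i j = gauss_to_C (sigma_gauss mu i j).
Proof.
rewrite /sigm /sigma_gauss; case: (nat_of_ord mu) => [|[|[|[|m]]]];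
  by case: i => [|[|i]]; case: j => [|[|j]] //=; apply/eqP; rewrite eq_complex /= ?oppr0 ?eqxx.
Qed.

Lemma gam_gauss_to_C mu a b : gam R mu a b = gauss_to_C (gamma_gauss mu a b).
Proof.
rewrite /gam /gamma_gauss /sigmt /sigmat_gauss.
by do 2 case: ifP => _; rewrite ?sigm_gauss_to_C ?gauss_to_C_opp.
Qed.

Lemma eps2_gauss_to_C (i j : nat) : eps2 R i j = gauss_to_C (eps2_gauss i j).
Proof.
by case: i => [|[|i]]; case: j => [|[|j]] //=; apply/eqP; rewrite eq_complex /= ?oppr0 ?eqxx.
Qed.

Lemma eps4_gauss_to_C a b : eps4 R a b = gauss_to_C (eps4_gauss a b).
Proof.
rewrite /eps4 /eps4_gauss.
by case: ifP => _; [|case: ifP => _]; rewrite ?eps2_gauss_to_C ?gauss_to_C_opp.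
Qed.

Lemma eta_gauss_to_C mu nu : Defs.eta R mu nu = gauss_to_C (eta_gauss mu nu).
Proof.
rewrite /Defs.eta /eta_gauss; case: ifP => _ //; case: ifP => _ //.
by apply/eqP; rewrite eq_complex /= ?oppr0 ?eqxx.
Qed.

Lemma gamlow_gauss_to_C mu c b : gamlow R mu c b = gauss_to_C (gamlow_gauss mu c b).
Proof.
rewrite /gamlow /gamlow_gauss gauss_to_C_sum4; apply: eq_bigr => a _.
by rewrite gauss_to_C_mul gam_gauss_to_C eps4_gauss_to_C.
Qed.

Lemma beta4_intE a b c d : beta4 a b c d = (beta4_int a b c d)%:~R :> C.
Proof.
have -> : beta4 a b c d = 2^-1 * gauss_to_C (beta4_gauss a b c d).
  rewrite /beta4 gauss_to_C_sum4; congr (_ * _); apply: eq_bigr => mu _.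
  rewrite gauss_to_C_mul gauss_to_C_conj gauss_to_C_sum4 gamlow_gauss_to_C.
  congr (conjc _ * _); apply: eq_bigr => nu _.
  by rewrite gauss_to_C_mul eta_gauss_to_C gamlow_gauss_to_C.
have /allP/(_ a (mem_ord4_enum a))/allP/(_ b (mem_ord4_enum b)) := beta4_gauss_even.
move=> /allP/(_ c (mem_ord4_enum c))/allP/(_ d (mem_ord4_enum d))/eqP ->.
rewrite /gauss_to_C /= -[Complex _ _]/((_ : R)%:C)%C rmorph_int intrM.
by rewrite mulrA mulVf ?mul1r // pnatr_eq0.
Qed.

Lemma beta2_intE a b : beta2 a b = (beta2_int a b)%:~R :> C.
Proof. by []. Qed.

End GaussianToComplex.

Inductive coef :=
  | CNat of nat | CNeg of coef | CMul of coef & coef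
  | CBeta2 of 'I_4 & 'I_4 | CBeta4 of 'I_4 & 'I_4 & 'I_4 & 'I_4.

Fixpoint coef_int (c : coef) : int :=
  match c with
  | CNat n => n%:Z
  | CNeg c => - coef_int c
  | CMul c1 c2 => coef_int c1 * coef_int c2
  | CBeta2 a b => beta2_int a b
  | CBeta4 a b c d => beta4_int a b c d
  end.

(* [EVar k a A] is the odd generator psibar^a_A (k = 0), psi^a_A (k = 1) or
   D_mu psi^a_A (k = 2); [EK a b] is the gauge invariant C_mu^ab + d_mu J^ab. *)
Inductive gexpr :=
  | EVar of nat & 'I_4 & 'I_3 | EK of 'I_4 & 'I_4
  | EAdd of gexpr & gexpr | ESub of gexpr & gexpr | EMul of gexpr & gexpr
  | EScale of coef & gexpr | ESum4 of ('I_4 -> gexpr) | ESum3 of ('I_3 -> gexpr).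

Definition var_code (k : nat) (a : 'I_4) (A : 'I_3) : nat := k * 12 + a * 3 + A.

Fixpoint gexpr_nf (kf : 'I_4 -> 'I_4 -> gpoly) (e : gexpr) : gpoly :=
  match e with
  | EVar k a A => [:: (1, [:: var_code k a A])]
  | EK a b => kf a b
  | EAdd e1 e2 => gpoly_add (gexpr_nf kf e1) (gexpr_nf kf e2)
  | ESub e1 e2 => gpoly_add (gexpr_nf kf e1) (gpoly_scale (-1) (gexpr_nf kf e2))
  | EMul e1 e2 => gpoly_mul (gexpr_nf kf e1) (gexpr_nf kf e2)
  (* Testing the coefficient first avoids normalising the many terms killed by a
     vanishing beta_abcd. *)
  | EScale c e => if coef_int c == 0 then [::] else gpoly_scale (coef_int c) (gexpr_nf kf e)
  | ESum4 F => foldr (fun i => gpoly_add (gexpr_nf kf (F i))) [::] ord4_enum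
  | ESum3 F => foldr (fun i => gpoly_add (gexpr_nf kf (F i))) [::] ord3_enum
  end.

Section Denotation.
Variables (R : realType) (B : lalgType R[i]).
Variables (vk : nat -> 'I_4 -> 'I_3 -> B) (K : 'I_4 -> 'I_4 -> B).

Fixpoint coef_val (c : coef) : R[i] :=
  match c with
  | CNat n => n%:R
  | CNeg c => - coef_val c
  | CMul c1 c2 => coef_val c1 * coef_val c2
  | CBeta2 a b => beta2 a b
  | CBeta4 a b c d => beta4 a b c d
  end.

Fixpoint gexpr_val (e : gexpr) : B :=
  match e with
  | EVar k a A => vk k a A
  | EK a b => K a b
  | EAdd e1 e2 => gexpr_val e1 + gexpr_val e2
  | ESub e1 e2 => gexpr_val e1 - gexpr_val e2
  | EMul e1 e2 => gexpr_val e1 * gexpr_val e2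
  | EScale c e => coef_val c *: gexpr_val e
  | ESum4 F => \sum_(i < 4) gexpr_val (F i)
  | ESum3 F => \sum_(i < 3) gexpr_val (F i)
  end.

Lemma coef_valE c : coef_val c = (coef_int c)%:~R.
Proof.
elim: c => [n | c IH | c1 IH1 c2 IH2 | a b | a b c d] /=.
- by [].
- by rewrite IH rmorphN.
- by rewrite IH1 IH2 rmorphM.
- exact: beta2_intE.
- exact: beta4_intE.
Qed.

Definition code_val (n : nat) : B := vk (n %/ 12) (inord (n %% 12 %/ 3)) (inord (n %% 3)).

Lemma code_val_var k a A : code_val (var_code k a A) = vk k a A.
Proof.
have ltA : (A < 3)%N := ltn_ord A.
have lt12 : (a * 3 + A < 12)%N by have := ltn_ord a; lia.
rewrite /code_val /var_code -addnA divnMDl // divn_small // addn0 modnMDl modn_small //.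
rewrite divnMDl // divn_small // addn0 addnA.
have -> : (k * 12 + a * 3 = (k * 4 + a) * 3)%N by lia.
by rewrite modnMDl modn_small //; congr vk; apply: val_inj; rewrite /= inordK.
Qed.

Hypothesis vk_anticomm :
  forall k a A k' a' A', vk k a A * vk k' a' A' = - (vk k' a' A' * vk k a A).
Hypothesis vk_sqr : forall k a A, vk k a A * vk k a A = 0.

Lemma gexpr_nf_sound kf : (forall a b, gpoly_eval code_val (kf a b) = K a b) ->
  forall e, gpoly_eval code_val (gexpr_nf kf e) = gexpr_val e.
Proof.
have code_anticomm i j : code_val i * code_val j = - (code_val j * code_val i).
  exact: vk_anticomm.
have code_sqr i : code_val i * code_val i = 0 by exact: vk_sqr.
have eval_foldr I (s : seq I) (F : I -> gpoly) :
    gpoly_eval code_val (foldr (fun i => gpoly_add (F i)) [::] s) =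
    \sum_(i <- s) gpoly_eval code_val (F i).
  elim: s => [|i s IH] /=; first by rewrite /gpoly_eval !big_nil.
  by rewrite gpoly_add_sound IH big_cons.
move=> hK; elim=> [k a A | a b | e1 IH1 e2 IH2 | e1 IH1 e2 IH2 | e1 IH1 e2 IH2 | c e IH
  | F IH | F IH]; cbn [gexpr_nf gexpr_val].
- by rewrite gpoly_eval_cons /gpoly_eval big_nil addr0 /word_eval big_seq1 mulr1z code_val_var.
- exact: hK.
- by rewrite gpoly_add_sound IH1 IH2.
- by rewrite gpoly_add_sound gpoly_scale_sound mulrN1z IH1 IH2.
- by rewrite (gpoly_mul_sound code_anticomm code_sqr) IH1 IH2.
- rewrite coef_valE; case: eqP => [->|_]; last by rewrite gpoly_scale_sound IH scaler_int.
  by rewrite /gpoly_eval big_nil scale0r.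
- by rewrite eval_foldr big_ord4_enum; apply: eq_bigr => i _; exact: IH.
- by rewrite eval_foldr big_ord3_enum; apply: eq_bigr => i _; exact: IH.
Qed.

End Denotation.

Definition J_expr (a b : 'I_4) : gexpr := ESum3 (fun A => EMul (EVar 0 a A) (EVar 1 b A)).

Definition K_expr (a b : 'I_4) : gexpr :=
  ESum3 (fun A => EScale (CNat 2) (EMul (EVar 0 a A) (EVar 2 b A))).

Definition J2_expr : gexpr :=
  ESum4 (fun a => ESum4 (fun b => ESum4 (fun c => ESum4 (fun d =>
    EScale (CBeta4 a c b d) (EMul (J_expr a b) (J_expr c d)))))).

Definition X2_expr : gexpr :=
  EScale (CNat 4) (ESum4 (fun a => ESum4 (fun b => ESum4 (fun c =>
    ESum4 (fun d => ESum4 (fun e => ESum4 (fun f =>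
      EScale (CMul (CBeta4 b c e f) (CBeta2 a d))
        (EAdd (EMul (EMul (J_expr a d) (J_expr b e)) (J_expr c f))
              (EScale (CNat 2) (EMul (EMul (J_expr a e) (J_expr b f)) (J_expr c d))))))))))).

Definition prop1_lhs (a b : 'I_4) : gexpr := EMul X2_expr (EK a b).

Definition prop1_rhs (a b : 'I_4) : gexpr :=
  ESub
    (EScale (CNeg (CNat 4)) (ESum4 (fun c => ESum4 (fun f =>
      EMul (EK c b) (EScale (CBeta2 c f)
        (EAdd (EMul J2_expr (J_expr a f))
              (EScale (CNat 2) (ESum4 (fun g0 => ESum4 (fun h =>
                 ESum4 (fun d => ESum4 (fun e =>
                 EScale (CBeta4 g0 h d e)
                   (EMul (EMul (J_expr g0 d) (J_expr h f)) (J_expr a e))))))))))))))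
    (EScale (CNat 8) (ESum4 (fun g0 => ESum4 (fun c => ESum4 (fun f => ESum4 (fun h =>
      ESum4 (fun d => ESum4 (fun e =>
        EMul (EK g0 b) (EScale (CMul (CBeta2 c f) (CBeta4 g0 h d e))
          (EAdd (EAdd (EMul (EMul (J_expr h e) (J_expr c f)) (J_expr a d))
                      (EMul (EMul (J_expr c d) (J_expr h f)) (J_expr a e)))
                (EMul (EMul (J_expr h d) (J_expr c e)) (J_expr a f)))))))))))).

Definition K_nf (a b : 'I_4) : gpoly := gexpr_nf (fun _ _ => [::]) (K_expr a b).

Lemma prop1_nf : all (fun a => all (fun b =>
  gexpr_nf K_nf (prop1_lhs a b) == gexpr_nf K_nf (prop1_rhs a b)) ord4_enum) ord4_enum.
Proof. by vm_compute. Qed.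

Lemma prop1_gexpr (R : realType) (B : lalgType R[i])
    (vk : nat -> 'I_4 -> 'I_3 -> B) (K : 'I_4 -> 'I_4 -> B) :
  (forall k a A k' a' A', vk k a A * vk k' a' A' = - (vk k' a' A' * vk k a A)) ->
  (forall k a A, vk k a A * vk k a A = 0) ->
  (forall a b, K a b = gexpr_val vk K (K_expr a b)) ->
  forall a b, gexpr_val vk K (prop1_lhs a b) = gexpr_val vk K (prop1_rhs a b).
Proof.
move=> vk_anticomm vk_sqr hK a b.
have hK_nf a' b' : gpoly_eval (code_val vk) (K_nf a' b') = K a' b'.
  rewrite hK; apply: (gexpr_nf_sound (K := fun _ _ => 0) vk_anticomm vk_sqr).
  by move=> *; rewrite /gpoly_eval big_nil.
rewrite -!(gexpr_nf_sound vk_anticomm vk_sqr hK_nf).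
by have /allP/(_ a (mem_ord4_enum a))/allP/(_ b (mem_ord4_enum b))/eqP -> := prop1_nf.
Qed.

Theorem proposition1 (R : realType) (g : R) (Amu : Gauge R) (psi : Field R) :
  g != 0 ->
  (forall (mu : 'I_4) (x : 'rV[R]_4) (A B : 'I_3),
      conjc (Amu mu x A B) = Amu mu x B A) ->
  (forall (a : 'I_4) (A : 'I_3) (x : 'rV[R]_4), is_odd (psi a A x)) ->
  (forall (a : 'I_4) (A : 'I_3), diff_field (psi a A)) ->
  forall (x : 'rV[R]_4) (mu a b : 'I_4),
    gmul (X2 psi x) (Kc g Amu psi mu a b x)
    = gscal (-4)
        (\sum_(c < 4) \sum_(f < 4)
           gmul (Kc g Amu psi mu c b x)
             (gscal (beta2 c f : R[i])
                (gmul (J2 psi x) (Jc psi a f x)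
                 + gscal 2 (\sum_(g0 < 4) \sum_(h < 4) \sum_(d < 4) \sum_(e < 4)
                      gscal (beta4 g0 h d e)
                        (gmul (gmul (Jc psi g0 d x) (Jc psi h f x)) (Jc psi a e x))))))
      - gscal 8
        (\sum_(g0 < 4) \sum_(c < 4) \sum_(f < 4) \sum_(h < 4) \sum_(d < 4) \sum_(e < 4)
           gmul (Kc g Amu psi mu g0 b x)
             (gscal ((beta2 c f : R[i]) * beta4 g0 h d e)
                (gmul (gmul (Jc psi h e x) (Jc psi c f x)) (Jc psi a d x)
                 + gmul (gmul (Jc psi c d x) (Jc psi h f x)) (Jc psi a e x)
                 + gmul (gmul (Jc psi h d x) (Jc psi c e x)) (Jc psi a f x)))).
Proof.
move=> _ Amu_herm psi_odd psi_diff x mu a b.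
have psi_par c A y : has_parity true (psi c A y : grass R) by apply/is_oddE.
pose vk k c A : grass R :=
  match k with 0 => gconj (psi c A x) | 1 => psi c A x | _ => Dpsi g Amu psi mu c A x end.
have vk_odd k c A : has_parity true (vk k c A).
  case: k => [|[|k]] /=; [exact: has_parity_gconj | exact: psi_par | exact: has_parity_Dpsi].
have Kc_val c b' : Kc g Amu psi mu c b' x =
    gexpr_val vk (fun c b => Kc g Amu psi mu c b x) (K_expr c b').
  exact: (@Kc_psibar_Dpsi R g Amu psi x mu (Amu_herm mu x) psi_diff).
exact: (prop1_gexpr (fun k c A k' c' A' => mul_odd_anticomm (vk_odd k c A) (vk_odd k' c' A'))
                    (fun k c A => mul_odd_sqr (vk_odd k c A)) Kc_val a b).
Qed.
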